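(* Let $R$ be a finitely generated standard algebra with a rate filtration $\mathbf F$ of some degree $d$ such that the set $\mathcal{H}$ of Hilbert series $\{I(z): I\in\mathbf F\}$ is finite. Then the Hilbert series $R(z)$ of $R$ and the Hilbert series $I(z)$ of every $I\in\mathbf F$ are rational functions. Moreover, if $\mathcal H$ contains exactly $s$ nonzero elements, then each of these rational functions can be written as a quotient of two polynomials with integer coefficients of degrees at most $ds$.
   Context: $R$ standard: graded, $R_0=k$, generated by $R_1$, finite-dimensional components, $R_+=\bigoplus_{i>0}R_i$. The Hilbert series of a graded space $V$ is $V(z)=\sum_j\dim V_j z^j$. For a homogeneous right ideal $J$, $m(J)$ is the maximal degree of a minimal homogeneous generator. A rate filtration is a set $\mathbf F$ of finitely generated homogeneous right ideals with $0,R_+\in\mathbf F$ such that for every $0\ne I\in\mathbf F$ there exist $J\in\mathbf F$, $J\ne I$, and a homogeneous $x\in I$ with $I=J+xR$, $m(J)\le m(I)$, and $(J:x)=\{a\in R: xa\in J\}\in\mathbf F$; it is of degree $d$ if $m(I)\le d$ for all $I\in\mathbf F$. *)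

From HB Require Import structures.
From mathcomp Require Import all_boot all_order all_algebra.
Set Implicit Arguments. Unset Strict Implicit. Unset Printing Implicit Defensive.
Import GRing.Theory.
Local Open Scope ring_scope.

Section Graded.
Variables (k : fieldType) (A : algType k).

Definition in_span (s : seq A) (a : A) : Prop :=
  exists c : nat -> k, a = \sum_(i < size s) c i *: s`_i.

Definition lin_indep (s : seq A) : Prop :=
  forall c : nat -> k, \sum_(i < size s) c i *: s`_i = 0 ->
    forall i, (i < size s)%N -> c i = 0.

Definition dim_is (V : A -> Prop) (n : nat) : Prop :=
  exists s : seq A, size s = n /\ lin_indep s /\ forall a, V a <-> in_span s a.

(* ---------- standard graded algebra: G n is the component R_n ---------- *)
Variable G : nat -> A -> Prop.

Definition is_subspace (V : A -> Prop) : Prop :=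
  [/\ V 0, (forall x y, V x -> V y -> V (x + y)) & (forall (c : k) x, V x -> V (c *: x))].

Definition standard_graded : Prop :=
  (forall n, is_subspace (G n)) /\
      (* R = (+)_n R_n : existence and uniqueness of homogeneous decompositions *)
      (forall a : A, exists (N : nat) (f : nat -> A),
          (forall i, G i (f i)) /\ a = \sum_(i < N) f i) /\
      (forall (N : nat) (f : nat -> A), (forall i, G i (f i)) ->
          \sum_(i < N) f i = 0 -> forall i, (i < N)%N -> f i = 0) /\
      (forall i j x y, G i x -> G j y -> G (i + j)%N (x * y)) /\
      (forall a, G 0 a <-> exists c : k, a = c%:A) /\
      (* R is generated by R_1 as a k-algebra *)
      (forall S : A -> Prop, S 1 -> (forall x y, S x -> S y -> S (x + y)) ->
          (forall x y, S x -> S y -> S (x * y)) ->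
          (forall (c : k) x, S x -> S (c *: x)) ->
          (forall x, G 1 x -> S x) -> forall a, S a) /\
      (forall n, exists s : seq A, forall a, G n a <-> in_span s a).

Definition Rplus (a : A) : Prop :=
  exists (N : nat) (f : nat -> A), (forall i, G i.+1 (f i)) /\ a = \sum_(i < N) f i.

Definition is_hilb (V : A -> Prop) (f : nat -> nat) : Prop :=
  forall j, dim_is (fun a => V a /\ G j a) (f j).

Definition rgen (gens : seq A) (a : A) : Prop :=
  exists r : nat -> A, a = \sum_(i < size gens) gens`_i * r i.

Definition same_set (U V : A -> Prop) : Prop := forall a, U a <-> V a.

Definition hom_gens (J : A -> Prop) (gens : seq A) (degs : seq nat) : Prop :=
  [/\ size degs = size gens,
      (forall i, (i < size gens)%N -> G (nth 0%N degs i) gens`_i)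
    & same_set J (rgen gens)].

Definition min_hom_gens (J : A -> Prop) (gens : seq A) (degs : seq nat) : Prop :=
  hom_gens J gens degs /\
  forall i, (i < size gens)%N ->
    ~ same_set J (rgen (take i gens ++ drop i.+1 gens)).

Definition fg_hom_right_ideal (J : A -> Prop) : Prop :=
  exists gens degs, hom_gens J gens degs.

(* m(J) = n : maximal degree of a minimal homogeneous generator (0 if J = 0) *)
Definition mdeg (J : A -> Prop) (n : nat) : Prop :=
  exists gens degs, min_hom_gens J gens degs /\ n = (\max_(e <- degs) e)%N.

Definition mdeg_le (J I : A -> Prop) : Prop :=
  forall mJ mI, mdeg J mJ -> mdeg I mI -> (mJ <= mI)%N.

Definition rate_filtration (F : (A -> Prop) -> Prop) : Prop :=
  [/\ (forall I, F I -> fg_hom_right_ideal I),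
      (exists I, F I /\ same_set I (fun a => a = 0)),
      (exists I, F I /\ same_set I Rplus)
    & (forall I, F I -> ~ same_set I (fun a => a = 0) ->
        exists J x, F J /\ ~ same_set J I /\ I x /\ (exists n, G n x) /\
           same_set I (fun a => exists j r, J j /\ a = j + x * r) /\
           mdeg_le J I /\
           (exists K, F K /\ same_set K (fun a => J (x * a))))].

Definition filtration_of_degree (F : (A -> Prop) -> Prop) (d : nat) : Prop :=
  forall I m, F I -> mdeg I m -> (m <= d)%N.

Definition in_H (F : (A -> Prop) -> Prop) (f : nat -> nat) : Prop :=
  exists I, F I /\ is_hilb I f.

Definition H_finite (F : (A -> Prop) -> Prop) : Prop :=
  exists L : seq (nat -> nat), forall f, in_H F f ->
    exists2 i, (i < size L)%N & f = nth (fun _ => 0%N) L i.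

Definition H_nonzero_card (F : (A -> Prop) -> Prop) (s : nat) : Prop :=
  exists L : seq (nat -> nat),
    [/\ size L = s,
        (forall i j, (i < size L)%N -> (j < size L)%N ->
           nth (fun _ => 0%N) L i = nth (fun _ => 0%N) L j -> i = j),
        (forall i, (i < size L)%N ->
           in_H F (nth (fun _ => 0%N) L i) /\
           nth (fun _ => 0%N) L i <> (fun _ => 0%N))
      & (forall f, in_H F f -> f <> (fun _ => 0%N) ->
           exists2 i, (i < size L)%N & f = nth (fun _ => 0%N) L i)].

End Graded.

(* f(z) = p(z)/q(z) with p, q in Z[z], q <> 0, i.e. q * f = p in Z[[z]] *)
Definition rat_repr (f : nat -> nat) (p q : {poly int}) : Prop :=
  q != 0 /\
  forall n, \sum_(i < n.+1) q`_i * (f (n - i)%N)%:Z = p`_n.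

Definition rational_series (f : nat -> nat) : Prop :=
  exists p q, rat_repr f p q.

Definition rational_series_deg (b : nat) (f : nat -> nat) : Prop :=
  exists p q, rat_repr f p q /\ (size p <= b.+1)%N /\ (size q <= b.+1)%N.

(* Every nonzero I in F splits as I = J + xR with x of degree e <= d and
   K = (J : x) in F, and the exact sequence 0 -> K(-e) -> J (+) R(-e) -> I -> 0
   gives I(z) = J(z) + z^e (R(z) - K(z)), where R(z) = 1 + R_+(z) and R_+ is in F.
   As H is finite, numbering its s nonzero members turns these identities into a
   linear system M h = (z^(e_i))_i over Z[z] whose entries have degree <= d.
   At z = 0 the matrix is 1 - P, where P records the relations J(z) < I(z)
   (or R_+(z) < I(z) when e = 0); they strictly decrease the series, so P is
   nilpotent, det M(0) = 1, and Cramer's rule writes each series as a quotient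
   of integer polynomials of degree at most ds. *)

From mathcomp Require Import all_boot all_order all_algebra.
From mathcomp Require Import zify ring.
From Stdlib Require Import Classical ClassicalEpsilon FunctionalExtensionality.
Set Implicit Arguments. Unset Strict Implicit. Unset Printing Implicit Defensive.
Import GRing.Theory.
Local Open Scope ring_scope.

(** * Spans and dimension *)

Section Span.
Variables (k : fieldType) (A : algType k).
Implicit Types (s t u v : seq A) (a : A) (c : nat -> k) (V W : A -> Prop).

Definition lincomb c s : A := \sum_(i < size s) c i *: s`_i.

Lemma lincomb_cat c u v :
  lincomb c (u ++ v) = lincomb c u + lincomb (fun i => c (size u + i)%N) v.
Proof.
rewrite /lincomb size_cat big_split_ord /=; congr (_ + _).
  by apply: eq_bigr => i _; rewrite nth_cat ltn_ord.
by apply: eq_bigr => i _; rewrite nth_cat ltnNge leq_addr /= addKn.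
Qed.

Lemma lincomb_mull x c v : x * lincomb c v = lincomb c (map (fun y => x * y) v).
Proof.
rewrite /lincomb size_map mulr_sumr; apply: eq_bigr => i _.
by rewrite -scalerAr (nth_map 0) ?mulr0 // ltn_ord.
Qed.

Lemma in_span_lincomb s c : in_span s (lincomb c s).
Proof. by exists c. Qed.

Lemma in_span0 s : in_span s 0.
Proof. by exists (fun _ => 0); rewrite big1 // => i _; rewrite scale0r. Qed.

Lemma in_spanD s a b : in_span s a -> in_span s b -> in_span s (a + b).
Proof.
move=> [c ->] [c' ->]; exists (fun i => c i + c' i).
by rewrite -big_split; apply: eq_bigr => i _; rewrite scalerDl.
Qed.

Lemma in_spanZ s (x : k) a : in_span s a -> in_span s (x *: a).
Proof.
move=> [c ->]; exists (fun i => x * c i).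
by rewrite scaler_sumr; apply: eq_bigr => i _; rewrite scalerA.
Qed.

Lemma in_spanN s a : in_span s a -> in_span s (- a).
Proof. by rewrite -scaleN1r; apply: in_spanZ. Qed.

Lemma in_span_nth s i : (i < size s)%N -> in_span s s`_i.
Proof.
move=> lti; exists (fun j => (j == i)%:R).
rewrite (bigD1 (Ordinal lti)) //= eqxx scale1r big1 ?addr0 // => j /negbTE.
by rewrite -val_eqE /= => ->; rewrite scale0r.
Qed.

Lemma subspace_span W s a : is_subspace W ->
  (forall i, (i < size s)%N -> W s`_i) -> in_span s a -> W a.
Proof. by move=> [W0 WD WZ] sW [c ->]; apply: (big_ind W) => // i _; apply/WZ/sW. Qed.

Lemma in_span_subspace s : is_subspace (in_span s).
Proof. by split; [apply: in_span0 | apply: in_spanD | apply: in_spanZ]. Qed.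

Lemma in_span_trans s t a :
  (forall i, (i < size t)%N -> in_span s t`_i) -> in_span t a -> in_span s a.
Proof. exact: subspace_span (in_span_subspace s). Qed.

Lemma in_span_catl u v a : in_span u a -> in_span (u ++ v) a.
Proof.
apply: in_span_trans => i lti; have -> : u`_i = (u ++ v)`_i by rewrite nth_cat lti.
by apply: in_span_nth; rewrite size_cat (leq_trans lti) ?leq_addr.
Qed.

Lemma in_span_catr u v a : in_span v a -> in_span (u ++ v) a.
Proof.
apply: in_span_trans => i lti.
have -> : v`_i = (u ++ v)`_(size u + i) by rewrite nth_cat ltnNge leq_addr /= addKn.
by apply: in_span_nth; rewrite size_cat ltn_add2l.
Qed.

Lemma in_span_coefs s t : (forall i, (i < size s)%N -> in_span t s`_i) ->
  exists C : nat -> nat -> k,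
    forall i, (i < size s)%N -> s`_i = \sum_(j < size t) C i j *: t`_j.
Proof.
move=> st; suff /choice[C hC] : forall i, exists c, (i < size s)%N -> s`_i = lincomb c t.
  by exists C.
move=> i; case: (ltnP i (size s)) => [/st[c ->]|]; first by exists c.
by exists (fun _ => 0).
Qed.

(* Steinitz exchange, through the rank of the coefficient matrix. *)
Lemma lin_indep_size_le s t : lin_indep s ->
  (forall i, (i < size s)%N -> in_span t s`_i) -> (size s <= size t)%N.
Proof.
move=> inds /in_span_coefs[C sC]; rewrite leqNgt; apply/negP => lt_ts.
pose M : 'M[k]_(size s, size t) := \matrix_(i, j) C i j.
have : kermx M != 0.
  by rewrite -mxrank_eq0 mxrank_ker subn_eq0 -ltnNge (leq_ltn_trans (rank_leq_col M)).
case/rowV0Pn => y /sub_kermxP yM; apply/negP; rewrite negbK.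
pose c n := oapp (y 0) 0 (insub n : option 'I_(size s)).
have yC (j : 'I_(size t)) : \sum_(i < size s) y 0 i * C i j = 0.
  transitivity ((y *m M) 0 j); last by rewrite yM mxE.
  by rewrite mxE; apply: eq_bigr => i _; rewrite mxE.
have lc0 : lincomb c s = 0.
  rewrite /lincomb (eq_bigr (fun i : 'I_(size s) =>
    \sum_(j < size t) (y 0 i * C i j) *: t`_j)); last first.
    move=> i _; rewrite sC // scaler_sumr /c valK /=.
    by apply: eq_bigr => j _; rewrite scalerA.
  by rewrite exchange_big /= big1 // => j _; rewrite -scaler_suml yC scale0r.
apply/eqP/rowP => i; rewrite mxE.
by have := inds c lc0 i (ltn_ord i); rewrite /c valK.
Qed.

Lemma dim_is_unique V n m : dim_is V n -> dim_is V m -> n = m.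
Proof.
move=> [b [<- [ib hb]]] [b' [<- [ib' hb']]]; apply/eqP; rewrite eqn_leq.
by apply/andP; split; apply: lin_indep_size_le => // i /in_span_nth;
  [move/hb/hb' | move/hb'/hb].
Qed.

Lemma dim_is_eq V W n : same_set V W -> dim_is V n -> dim_is W n.
Proof. by move=> VW [b [sb [ib hb]]]; exists b; do 2!split=> //; move=> a; rewrite -VW. Qed.

Lemma lin_indep_nil : lin_indep ([::] : seq A).
Proof. by []. Qed.

Lemma lin_indep_rcons s w : lin_indep s -> ~ in_span s w -> lin_indep (rcons s w).
Proof.
move=> inds sw c; rewrite size_rcons big_ord_recr /= nth_rcons ltnn eqxx.
under eq_bigr => i _ do rewrite nth_rcons ltn_ord.
move=> lc0; have cw : c (size s) = 0.
  apply: contra_not_eq sw => cw0.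
  rewrite -[w]scale1r -(mulVf cw0) -scalerA.
  have -> : c (size s) *: w = - lincomb c s by apply/eqP; rewrite -addr_eq0 addrC; apply/eqP.
  exact/in_spanZ/in_spanN/in_span_lincomb.
move: lc0; rewrite cw scale0r addr0 => lc0 i; rewrite ltnS leq_eqVlt.
by case/orP=> [/eqP -> // | /(inds c lc0 i)].
Qed.

Lemma nth_rcons_pred W s w : (forall i, (i < size s)%N -> W s`_i) -> W w ->
  forall i, (i < size (rcons s w))%N -> W (rcons s w)`_i.
Proof.
move=> sW Ww i; rewrite size_rcons ltnS leq_eqVlt nth_rcons.
by case/orP => [/eqP -> | lti]; [rewrite ltnn eqxx | rewrite lti; apply: sW].
Qed.

(* Induction on [size t - size u], which bounds the number of vectors still
   to be added by Steinitz. *)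
Lemma extend_lin_indep W t u : is_subspace W -> (forall a, W a -> in_span t a) ->
  lin_indep u -> (forall i, (i < size u)%N -> W u`_i) ->
  exists v, [/\ lin_indep (u ++ v), (forall i, (i < size v)%N -> W v`_i)
    & forall a, W a <-> in_span (u ++ v) a].
Proof.
move=> Wsub Wt; move: {2}(size t - size u)%N (leqnn (size t - size u)%N) => n.
elim: n u => [|n IH] u hn indu uW;
  have [Wu|/not_all_ex_not[w /[dup] /not_imply_elim Ww /not_imply_elim2 nw]] :=
    classic (forall a, W a -> in_span u a);
  try by exists [::]; rewrite cats0; split=> // a; split; [apply: Wu | apply: subspace_span].
all: have induw := lin_indep_rcons indu nw; have uwW := nth_rcons_pred uW Ww.
all: have : (size (rcons u w) <= size t)%N by apply: lin_indep_size_le induw _ => i /uwW/Wt.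
all: rewrite size_rcons => lt_ut.
  by move: hn; rewrite leqn0 subn_eq0 leqNgt lt_ut.
have [|v [indv vW Wv]] := IH _ _ induw uwW; first by rewrite size_rcons; lia.
by exists (w :: v); rewrite -cat_rcons; split=> // -[|i] //= /vW.
Qed.

Lemma dim_is_exists W t : is_subspace W -> (forall a, W a -> in_span t a) ->
  exists n, dim_is W n.
Proof.
move=> Wsub Wt; have [v [indv _ Wv]] :=
  extend_lin_indep Wsub Wt lin_indep_nil (fun i => ltac:(by [])).
by exists (size v), v.
Qed.

Lemma dim_is_le V W t n m : is_subspace W -> (forall a, W a -> in_span t a) ->
  (forall a, V a -> W a) -> dim_is V n -> dim_is W m ->
  (n <= m)%N /\ (n = m -> forall a, W a -> V a).
Proof.
move=> Wsub Wt VW [b [<- [indb Vb]]] dimW.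
have bW i : (i < size b)%N -> W b`_i by move/in_span_nth/Vb/VW.
have [v [indv _ Wv]] := extend_lin_indep Wsub Wt indb bW.
have : dim_is W (size b + size v) by exists (b ++ v); rewrite size_cat.
move/(dim_is_unique dimW) => ->; split; first exact: leq_addr.
move/eqP; rewrite -{1}[size b]addn0 eqn_add2l eq_sym size_eq0 => /eqP v0 a.
by move/Wv; rewrite v0 cats0 => /Vb.
Qed.

Lemma lin_indep_cat u v : lin_indep u ->
  (forall c, lincomb c (u ++ v) = 0 ->
     forall i, (i < size v)%N -> c (size u + i)%N = 0) ->
  lin_indep (u ++ v).
Proof.
move=> indu indv c lc0; have cv := indv c lc0.
have lcv : lincomb (fun i => c (size u + i)%N) v = 0.
  by rewrite /lincomb big1 // => i _; rewrite cv // scale0r.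
move: (lc0); rewrite -/(lincomb c _) lincomb_cat lcv addr0 => lcu i.
rewrite size_cat; case: (ltnP i (size u)) => [/(indu c lcu i) // | le_ui lti].
by rewrite -(subnKC le_ui) cv // -(ltn_add2l (size u)) subnKC.
Qed.

End Span.

Section AddMulSpace.
Variables (k : fieldType) (A : algType k) (J V : A -> Prop) (x : A).
Hypotheses (J_sub : is_subspace J) (V_sub : is_subspace V).

Definition add_mul_space (y : A) : Prop := exists j z, [/\ J j, V z & y = j + x * z].

Lemma add_mul_space_sub : is_subspace add_mul_space.
Proof.
have [J0 JD JZ] := J_sub; have [V0 VD VZ] := V_sub; split.
- by exists 0, 0; rewrite mulr0 addr0.
- move=> _ _ [j1 [z1 [Jj1 Vz1 ->]]] [j2 [z2 [Jj2 Vz2 ->]]].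
  by exists (j1 + j2), (z1 + z2); rewrite mulrDr addrACA; split; [apply: JD | apply: VD |].
- move=> c _ [j [z [Jj Vz ->]]]; exists (c *: j), (c *: z).
  by rewrite scalerDr scalerAr; split; [apply: JZ | apply: VZ |].
Qed.

(* A basis [b] of [J], and a basis [u ++ v] of [V] extending a basis [u] of
   the kernel [{z in V | x z in J}]: then [b ++ x v] is a basis of [J + xV]. *)
Variables (b u v : seq A).
Hypotheses (b_indep : lin_indep b) (b_span : forall a, J a <-> in_span b a).
Hypothesis u_span : forall a, V a /\ J (x * a) <-> in_span u a.
Hypotheses (uv_indep : lin_indep (u ++ v)) (vV : forall i, (i < size v)%N -> V v`_i).
Hypothesis uv_span : forall a, V a <-> in_span (u ++ v) a.

Lemma add_mul_basis_indep : lin_indep (b ++ map (fun y => x * y) v).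
Proof.
have bJ : forall i, (i < size b)%N -> J b`_i by move=> i /in_span_nth/b_span.
apply: lin_indep_cat => // c; rewrite lincomb_cat -lincomb_mull.
set z := lincomb _ v => lc0 i; rewrite size_map => lti.
have Vz : V z by apply: (subspace_span V_sub vV); apply: in_span_lincomb.
have Jxz : J (x * z).
  have -> : x * z = - lincomb c b by apply/eqP; rewrite -addr_eq0 addrC lc0.
  rewrite -scaleN1r; have [_ _ JZ] := J_sub; apply/JZ/(subspace_span J_sub bJ).
  exact: in_span_lincomb.
have [g zg] := (u_span z).1 (conj Vz Jxz).
pose c' n := if (n < size u)%N then g n else - c (size b + (n - size u))%N.
have lc'0 : lincomb c' (u ++ v) = 0.
  rewrite lincomb_cat /lincomb.
  under eq_bigr => j _ do rewrite /c' ltn_ord.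
  under [X in _ + X]eq_bigr => j _ do rewrite /c' ltnNge leq_addr /= addKn scaleNr.
  by rewrite -zg sumrN subrr.
have := @uv_indep c' lc'0 (size u + i)%N; rewrite size_cat ltn_add2l => /(_ lti).
by rewrite /c' ltnNge leq_addr /= addKn => /eqP; rewrite oppr_eq0 => /eqP.
Qed.

Lemma add_mul_basis_span y :
  add_mul_space y <-> in_span (b ++ map (fun y => x * y) v) y.
Proof.
have [J0 JD JZ] := J_sub; have [V0 _ _] := V_sub; split.
  move=> [j [z [Jj Vz ->]]]; apply: in_spanD; first exact/in_span_catl/b_span.
  have [c ->] := (uv_span z).1 Vz; rewrite -/(lincomb c _) lincomb_cat mulrDr.
  apply: in_spanD; last by rewrite lincomb_mull; apply/in_span_catr/in_span_lincomb.
  apply/in_span_catl/b_span; rewrite /lincomb mulr_sumr; apply: (big_ind J) => // i _.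
  by rewrite -scalerAr; apply/JZ/((u_span _).2 (in_span_nth (ltn_ord i))).2.
apply: (subspace_span add_mul_space_sub) => i; rewrite size_cat size_map nth_cat.
case: ifP => [/in_span_nth/b_span Jbi _ | /negbT]; first by exists b`_i, 0; rewrite mulr0 addr0.
rewrite -leqNgt => le_bi lti.
have ltv : (i - size b < size v)%N by rewrite -(ltn_add2l (size b)) subnKC.
by rewrite (nth_map 0) //; exists 0, v`_(i - size b); rewrite add0r; split=> //; apply: vV.
Qed.

End AddMulSpace.

Lemma dim_is_add_mul (k : fieldType) (A : algType k) (J V : A -> Prop) x t nJ nV nK :
  is_subspace J -> is_subspace V -> (forall a, V a -> in_span t a) ->
  dim_is J nJ -> dim_is V nV -> dim_is (fun y => V y /\ J (x * y)) nK ->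
  exists n, dim_is (add_mul_space J V x) n /\ (n + nK = nJ + nV)%N.
Proof.
move=> J_sub V_sub Vt [b [<- [indb Jb]]] dimV [u [<- [indu Ku]]].
have uV i : (i < size u)%N -> V u`_i by move/in_span_nth/Ku => [].
have [v [induv vV Vuv]] := extend_lin_indep V_sub Vt indu uV.
have -> : nV = (size u + size v)%N.
  by apply: (dim_is_unique dimV); exists (u ++ v); rewrite size_cat.
exists (size b + size v)%N; split; last by rewrite addnAC addnA.
exists (b ++ map (fun y => x * y) v); rewrite size_cat size_map.
split=> //; split; first exact: (add_mul_basis_indep J_sub V_sub indb Jb Ku).
exact: (add_mul_basis_span J_sub V_sub Jb Ku).
Qed.

Section Graded.
Variables (k : fieldType) (A : algType k) (G : nat -> A -> Prop).
Hypothesis hG : standard_graded G.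
Implicit Types (gens : seq A) (degs : seq nat) (I J K V W : A -> Prop) (x : A).

Lemma G_subspace n : is_subspace (G n).
Proof. by case: hG. Qed.

Lemma G0 n : G n 0.
Proof. by case: (G_subspace n). Qed.

Lemma GD n a b : G n a -> G n b -> G n (a + b).
Proof. by case: (G_subspace n) => _ GnD _; apply: GnD. Qed.

Lemma GZ n c a : G n a -> G n (c *: a).
Proof. by case: (G_subspace n) => _ _ GnZ; apply: GnZ. Qed.

Lemma GB n a b : G n a -> G n b -> G n (a - b).
Proof. by move=> Ga Gb; rewrite -scaleN1r; apply/GD/GZ. Qed.

Lemma G_sum_eq0 N (f : nat -> A) : (forall i, G i (f i)) ->
  \sum_(i < N) f i = 0 -> forall i, (i < N)%N -> f i = 0.
Proof. by case: hG => _ [_ [h _]]; apply: h. Qed.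

Lemma GM i j x y : G i x -> G j y -> G (i + j)%N (x * y).
Proof. by case: hG => _ [_ [_ [h _]]]; apply: h. Qed.

Lemma G0_scalar a : G 0 a <-> exists c : k, a = c%:A.
Proof. by case: hG => _ [_ [_ [_ [h _]]]]; apply: h. Qed.

Lemma G_spanned n : exists s, forall a, G n a <-> in_span s a.
Proof. by case: hG => _ [_ [_ [_ [_ [_ h]]]]]; apply: h. Qed.

(** * Homogeneous components *)

Lemma homogeneous_decomposition a : exists p : nat * (nat -> A),
  (forall i, G i (p.2 i)) /\ a = \sum_(i < p.1) p.2 i.
Proof. by case: hG => _ [/(_ a)[N [f hf]] _]; exists (N, f). Qed.

(* Chosen by [epsilon], so that [hcomp] does not depend on the proof [hG];
   the choice meets its specification only under [hG]. *)
Definition hdecomp a : nat * (nat -> A) :=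
  epsilon (inhabits (0%N, fun _ => 0))
    (fun p => (forall i, G i (p.2 i)) /\ a = \sum_(i < p.1) p.2 i).

Lemma hdecompP a :
  (forall i, G i ((hdecomp a).2 i)) /\ a = \sum_(i < (hdecomp a).1) (hdecomp a).2 i.
Proof. exact: epsilon_spec (homogeneous_decomposition a). Qed.

Definition hcomp n a : A := if (n < (hdecomp a).1)%N then (hdecomp a).2 n else 0.

Lemma sum_padded N M (f : nat -> A) : (N <= M)%N ->
  \sum_(i < M) (if (i < N)%N then f i else 0) = \sum_(i < N) f i.
Proof. by move=> le_NM; rewrite (big_ord_widen _ _ le_NM) [RHS]big_mkcond. Qed.

Lemma hcomp_unique N f a : (forall i, G i (f i)) -> a = \sum_(i < N) f i ->
  forall n, hcomp n a = if (n < N)%N then f n else 0.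
Proof.
move=> Gf ->{a} n; have [Gf' sum_f'] := hdecompP (\sum_(i < N) f i).
rewrite /hcomp; move: Gf' sum_f'.
set N' := (hdecomp _).1; set f' := (hdecomp _).2 => Gf' sum_f'.
pose g i := (if (i < N')%N then f' i else 0) - (if (i < N)%N then f i else 0).
have Gg i : G i (g i).
  by apply: GB; case: ifP => _; first [apply: Gf | apply: Gf' | apply: G0].
have sum_g : \sum_(i < maxn N N') g i = 0.
  by rewrite sumrB !sum_padded ?leq_maxl ?leq_maxr // -sum_f' subrr.
case: (ltnP n (maxn N N')) => [lt_n | le_n].
  by have /eqP := G_sum_eq0 Gg sum_g lt_n; rewrite subr_eq0 => /eqP.
by rewrite !ltnNge (leq_trans (leq_maxl _ _) le_n) (leq_trans (leq_maxr _ _) le_n).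
Qed.

Lemma hcompG n a : G n (hcomp n a).
Proof. by rewrite /hcomp; case: ifP => _; [apply: (hdecompP a).1 | apply: G0]. Qed.

Lemma hcomp_eventually0 a : exists N, (forall n, (N <= n)%N -> hcomp n a = 0) /\
  (forall M, (N <= M)%N -> a = \sum_(i < M) hcomp i a).
Proof.
exists (hdecomp a).1; split=> [n le_n | M le_M]; first by rewrite /hcomp ltnNge le_n.
by rewrite /hcomp sum_padded //; apply: (hdecompP a).2.
Qed.

Lemma hcomp_hom n m x : G m x -> hcomp n x = if n == m then x else 0.
Proof.
move=> Gx; rewrite (@hcomp_unique m.+1 (fun i => if i == m then x else 0)).
- by case: ltnP => // lt_mn; rewrite gtn_eqF.
- by move=> i; case: eqP => [->|_] //; apply: G0.
by rewrite big_ord_recr /= eqxx big1 ?add0r // => i _; rewrite ltn_eqF.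
Qed.

Lemma hcomp_id n a : G n a -> hcomp n a = a.
Proof. by move/(hcomp_hom n); rewrite eqxx. Qed.

Lemma hcompD n a b : hcomp n (a + b) = hcomp n a + hcomp n b.
Proof.
have [Na [a0 a_sum]] := hcomp_eventually0 a; have [Nb [b0 b_sum]] := hcomp_eventually0 b.
rewrite (@hcomp_unique (maxn Na Nb) (fun i => hcomp i a + hcomp i b)).
- case: ltnP => // le_n; rewrite a0 ?b0 ?addr0 //; apply: leq_trans le_n.
    exact: leq_maxr.
  exact: leq_maxl.
- by move=> i; apply/GD/hcompG/hcompG.
by rewrite big_split /= -a_sum ?leq_maxl // -b_sum ?leq_maxr.
Qed.

Lemma hcompZ n c a : hcomp n (c *: a) = c *: hcomp n a.
Proof.
have [N [a0 a_sum]] := hcomp_eventually0 a.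
rewrite (@hcomp_unique N (fun i => c *: hcomp i a)).
- by case: ltnP => // le_n; rewrite a0 // scaler0.
- by move=> i; apply/GZ/hcompG.
by rewrite -scaler_sumr -a_sum.
Qed.

Lemma hcomp0 n : hcomp n 0 = 0.
Proof. by have := hcompZ n 0 0; rewrite !scale0r. Qed.

Lemma hcomp_sum n m (F : 'I_m -> A) :
  hcomp n (\sum_(i < m) F i) = \sum_(i < m) hcomp n (F i).
Proof. exact: (big_morph _ (hcompD n) (hcomp0 n)). Qed.

Lemma hcompMl n e x r : G e x ->
  hcomp n (x * r) = if (e <= n)%N then x * hcomp (n - e) r else 0.
Proof.
move=> Gx; have [N [r0 r_sum]] := hcomp_eventually0 r.
pose f j := if (e <= j)%N then x * hcomp (j - e) r else 0.
rewrite (@hcomp_unique (e + N) f) /f.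
- case: ltnP => // le_n; case: ifP => // _.
  by rewrite r0 ?mulr0 //; lia.
- move=> i; case: ifP => le_ei; last exact: G0.
  by have := GM Gx (hcompG (i - e) r); rewrite subnKC.
rewrite big_split_ord /= big1 ?add0r => [|i _]; last by rewrite leqNgt ltn_ord.
by rewrite {1}(r_sum N) // mulr_sumr; apply: eq_bigr => i _; rewrite leq_addr addKn.
Qed.

Lemma hcomp_add_mul n e j x r : G e x ->
  hcomp n (j + x * r) = hcomp n j + if (e <= n)%N then x * hcomp (n - e) r else 0.
Proof. by move=> Gx; rewrite hcompD (hcompMl _ _ Gx). Qed.

(** * Homogeneous right ideals and Hilbert series *)

Definition graded V := forall a n, V a -> V (hcomp n a).

Definition right_ideal V := is_subspace V /\ forall a b, V a -> V (a * b).

Lemma rgen_right_ideal gens : right_ideal (rgen gens).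
Proof.
split; first split.
- by exists (fun _ => 0); rewrite big1 // => i _; rewrite mulr0.
- move=> _ _ [r1 ->] [r2 ->]; exists (fun i => r1 i + r2 i).
  by rewrite -big_split; apply: eq_bigr => i _; rewrite mulrDr.
- move=> c _ [r ->]; exists (fun i => c *: r i).
  by rewrite scaler_sumr; apply: eq_bigr => i _; rewrite scalerAr.
move=> _ b [r ->]; exists (fun i => r i * b).
by rewrite mulr_suml; apply: eq_bigr => i _; rewrite mulrA.
Qed.

Lemma rgen_nth gens i : (i < size gens)%N -> rgen gens gens`_i.
Proof.
move=> lti; exists (fun j => (j == i)%:R).
rewrite (bigD1 (Ordinal lti)) //= eqxx mulr1 big1 ?addr0 // => j ji.
rewrite (_ : (j == i :> nat) = false) ?mulr0 //.
by apply: contraNF ji => /eqP ji; apply/eqP/val_inj.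
Qed.

Lemma rgen_min gens J a : right_ideal J ->
  (forall i, (i < size gens)%N -> J gens`_i) -> rgen gens a -> J a.
Proof. by move=> [[J0 JD _] JM] Jg [r ->]; apply: (big_ind J) => // i _; apply/JM/Jg. Qed.

Lemma rgen_graded gens degs :
  (forall i, (i < size gens)%N -> G (nth 0%N degs i) gens`_i) -> graded (rgen gens).
Proof.
move=> Ggens _ n [r ->]; rewrite hcomp_sum.
exists (fun i => if (nth 0%N degs i <= n)%N then hcomp (n - nth 0%N degs i) (r i) else 0).
apply: eq_bigr => i _; rewrite (hcompMl _ _ (Ggens i (ltn_ord i))).
by case: ifP; rewrite ?mulr0.
Qed.

Lemma same_set_right_ideal I J : same_set I J -> right_ideal J -> right_ideal I.
Proof.
move=> IJ [[J0 JD JZ] JM]; split; first split.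
- exact/IJ.
- by move=> a b /IJ Ja /IJ Jb; apply/IJ/JD.
- by move=> c a /IJ Ja; apply/IJ/JZ.
by move=> a b /IJ Ja; apply/IJ/JM.
Qed.

Lemma fg_hom_right_idealP I :
  fg_hom_right_ideal G I -> right_ideal I /\ graded I.
Proof.
move=> [gens [degs [_ Ggens Igens]]]; split.
  exact: same_set_right_ideal Igens (rgen_right_ideal gens).
by move=> a n /Igens Ia; apply/Igens/(rgen_graded Ggens).
Qed.

Lemma subspaceI V W : is_subspace V -> is_subspace W -> is_subspace (fun a => V a /\ W a).
Proof.
move=> [V0 VD VZ] [W0 WD WZ]; split=> // [x y [Vx Wx] [Vy Wy] | c x [Vx Wx]].
  by split; [apply: VD | apply: WD].
by split; [apply: VZ | apply: WZ].
Qed.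

Lemma is_hilb_exists V : is_subspace V -> exists f, is_hilb G V f.
Proof.
move=> Vsub; suff /choice[f Vf] : forall j, exists n, dim_is (fun a => V a /\ G j a) n.
  by exists f.
move=> j.
have [t Gt] := G_spanned j.
by apply: (dim_is_exists (t := t) (subspaceI Vsub (G_subspace j))) => a [_ /Gt].
Qed.

Lemma is_hilb_eq V W f : same_set V W -> is_hilb G V f -> is_hilb G W f.
Proof.
by move=> VW Vf j; apply: dim_is_eq (Vf j) => a; split=> -[Va Ga]; split=> //; apply/VW.
Qed.

Lemma is_hilb_unique V f g : is_hilb G V f -> is_hilb G V g -> f =1 g.
Proof. by move=> Vf Vg n; apply: dim_is_unique (Vf n) (Vg n). Qed.

Lemma dim_is_nil V : (forall a, V a <-> a = 0) -> dim_is V 0.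
Proof.
move=> V0; exists [::]; do 2!split=> //; move=> a; rewrite V0.
by split=> [->|[c ->]]; [apply: in_span0 | rewrite big_ord0].
Qed.

Lemma is_hilb0 I f : same_set I (fun a => a = 0) -> is_hilb G I f -> f =1 (fun _ => 0%N).
Proof.
move=> I0 If n; apply: dim_is_unique (If n) (dim_is_nil _) => a.
by rewrite I0; split=> [[]//|->]; split=> //; apply: G0.
Qed.

Lemma Rplus_G0 a : Rplus G a -> G 0 a -> a = 0.
Proof.
move=> [N [f [Gf ->]]] G0a; pose f' i := if i is j.+1 then f j else 0.
have Gf' i : G i (f' i) by case: i => [|i]; [apply: G0 | apply: Gf].
have sum_f' : \sum_(i < N) f i = \sum_(i < N.+1) f' i by rewrite big_ord_recl add0r.
by have := hcomp_unique Gf' sum_f' 0; rewrite hcomp_id.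
Qed.

Lemma Rplus_hom n a : G n.+1 a -> Rplus G a.
Proof.
move=> Ga; exists n.+1, (fun i => if i == n then a else 0); split.
  by move=> i; case: eqP => [->|_] //; apply: G0.
by rewrite big_ord_recr /= eqxx big1 ?add0r // => i _; rewrite ltn_eqF.
Qed.

Lemma is_hilb_R_Rplus fR fP :
  is_hilb G (fun _ => True) fR -> is_hilb G (Rplus G) fP ->
  forall n, fR n = ((n == 0%N) + fP n)%N.
Proof.
move=> Rf Pf [|n] /=; last first.
  apply: (dim_is_unique (Rf n.+1)); apply: dim_is_eq (Pf n.+1) => a.
  by split=> -[Pa Ga]; split=> //; apply: Rplus_hom Ga.
rewrite (dim_is_unique (Pf 0%N) (dim_is_nil _)) => [|a]; last first.
  split=> [[Pa G0a]|->]; first exact: Rplus_G0.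
  by split; [exists 0%N, (fun _ => 0); rewrite big_ord0; split=> // i; apply: G0 | apply: G0].
apply: (dim_is_unique (Rf 0%N)); exists [:: 1]; do 2!split=> //.
  move=> c; rewrite big_ord1 /= => /eqP; rewrite scaler_eq0 oner_eq0 orbF => /eqP c0.
  by case.
move=> a; split.
  by case=> _ /G0_scalar[c ->]; exists (fun _ => c); rewrite big_ord1.
case=> c; rewrite big_ord1 => ->; split=> //; apply/G0_scalar; by exists (c 0%N).
Qed.

Section AddMulIdeal.
Variables (I J K : A -> Prop) (x : A) (e : nat).
Hypotheses (J_ideal : right_ideal J) (J_graded : graded J) (Gx : G e x).
Hypothesis I_add_mul : same_set I (fun a => exists j r, J j /\ a = j + x * r).
Hypothesis K_colon : same_set K (fun a => J (x * a)).

Lemma add_mul_ideal_sub : forall a, J a -> I a.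
Proof. by move=> a Ja; apply/I_add_mul; exists a, 0; rewrite mulr0 addr0. Qed.

Lemma add_mul_ideal_low n : (n < e)%N ->
  same_set (fun a => J a /\ G n a) (fun a => I a /\ G n a).
Proof.
move=> lt_ne a; split=> -[Ia Gna]; split=> //; first exact: add_mul_ideal_sub.
move: Gna; have [j [r [Jj ->]]] := (I_add_mul a).1 Ia.
by move/hcomp_id <-; rewrite (hcomp_add_mul _ _ _ Gx) leqNgt lt_ne addr0; apply: J_graded.
Qed.

Lemma add_mul_ideal_high n : (e <= n)%N ->
  same_set (add_mul_space (fun a => J a /\ G n a) (G (n - e)) x) (fun a => I a /\ G n a).
Proof.
move=> le_en a; split.
  move=> [j [z [[Jj Gj] Gz ->]]]; split; first by apply/I_add_mul; exists j, z.
  by apply: GD => //; rewrite -(subnKC le_en); apply: GM.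
move=> [/I_add_mul[j [r [Jj ->]]] Gn]; exists (hcomp n j), (hcomp (n - e) r).
split; [split; [exact: J_graded | exact: hcompG] | exact: hcompG |].
by move/hcomp_id: Gn => <-; rewrite (hcomp_add_mul _ _ _ Gx) le_en.
Qed.

Lemma is_hilb_add_mul fI fJ fK fR :
  is_hilb G I fI -> is_hilb G J fJ -> is_hilb G K fK -> is_hilb G (fun _ => True) fR ->
  forall n, (fI n + (if (e <= n)%N then fK (n - e) else 0) =
             fJ n + (if (e <= n)%N then fR (n - e) else 0))%N.
Proof.
move=> If Jf Kf Rf n; case: (leqP e n) => [le_en | lt_ne]; last first.
  by rewrite !addn0; apply: dim_is_unique (If n) (dim_is_eq (add_mul_ideal_low lt_ne) (Jf n)).
set m := (n - e)%N; have [t Gt] := G_spanned m.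
have Rm : dim_is (G m) (fR m) by apply: dim_is_eq (Rf m) => a; split=> [[]|] //.
have Km : dim_is (fun y => G m y /\ (J (x * y) /\ G n (x * y))) (fK m).
  apply: dim_is_eq (Kf m) => a; split=> [[/K_colon Jxa Gma] | [Gma [Jxa _]]].
    by do 2!split=> //; rewrite -(subnKC le_en); apply: GM.
  by split=> //; apply/K_colon.
have [nI [dimI <-]] := dim_is_add_mul (subspaceI J_ideal.1 (G_subspace n)) (G_subspace m)
  (fun a => (Gt a).1) (Jf n) Rm Km.
by rewrite (dim_is_unique (If n) (dim_is_eq (add_mul_ideal_high le_en) dimI)).
Qed.

Lemma add_mul_ideal_proper_neq0 : ~ same_set J I -> x <> 0.
Proof.
move=> JI x0; apply: JI => a; split; first exact: add_mul_ideal_sub.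
by case/I_add_mul => j [r [Jj ->]]; rewrite x0 mul0r addr0.
Qed.

(* In degree [0] the element [x] is a nonzero scalar, so [(J : x) = J]. *)
Lemma colon_scalar_hilb fJ fK : e = 0%N -> x <> 0 ->
  is_hilb G J fJ -> is_hilb G K fK -> fK =1 fJ.
Proof.
move=> e0 x0 Jf Kf; move: Gx; rewrite e0 => /G0_scalar[c xE].
have [[_ _ JZ] _] := J_ideal.
have c0 : c != 0 by apply: contra_not_neq x0 => c0; rewrite xE c0 scale0r.
apply: is_hilb_unique Kf (is_hilb_eq _ Jf) => a; rewrite K_colon xE mulr_algl.
by split=> [/(JZ c)|/(JZ c^-1)]; rewrite ?scalerA ?mulVf ?scale1r.
Qed.

Lemma add_mul_deg_le gens degs dd : hom_gens G I gens degs ->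
  (forall i, (i < size degs)%N -> (nth 0%N degs i <= dd)%N) ->
  ~ same_set J I -> (e <= dd)%N.
Proof.
move=> [sz Ggens Igens] le_dd JI; rewrite leqNgt; apply/negP => lt_dde.
apply: JI => a; split; first exact: add_mul_ideal_sub.
move/Igens; apply: (rgen_min J_ideal) => i lti; set di := nth 0%N degs i.
have le_die : (di < e)%N by apply: leq_ltn_trans lt_dde; apply: le_dd; rewrite sz.
have Igi : I gens`_i by apply/Igens/rgen_nth.
by have [] := (add_mul_ideal_low le_die (gens`_i)).2 (conj Igi (Ggens i lti)).
Qed.

End AddMulIdeal.

Lemma is_hilb_lt_proper I J fI fJ : is_subspace I -> graded I ->
  is_subspace J -> graded J -> (forall a, J a -> I a) -> ~ same_set J I ->
  is_hilb G I fI -> is_hilb G J fJ ->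
  (forall n, (fJ n <= fI n)%N) /\ exists n, (fJ n < fI n)%N.
Proof.
move=> Isub Igr Jsub Jgr JI neJI If Jf.
have le_n n : (fJ n <= fI n)%N /\ (fJ n = fI n -> forall a, I a /\ G n a -> J a /\ G n a).
  have [t Gt] := G_spanned n.
  apply: (@dim_is_le _ _ _ _ t _ _ (subspaceI Isub (G_subspace n)) _ _ (Jf n) (If n)) => a.
    by case=> _ /Gt.
  by case=> /JI.
split=> [n|]; first by case: (le_n n).
apply: NNPP => eq_f; apply: neJI => a; split=> [/JI // | Ia].
have [N [_ /(_ N (leqnn N)) ->]] := hcomp_eventually0 a; have [J0 JD _] := Jsub.
apply: (big_ind J) => // i _; have eq_i : fJ i = fI i.
  by apply/eqP; rewrite eqn_leq (le_n i).1 /= leqNgt; apply/negP => lt_i; apply: eq_f; exists i.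
by case: ((le_n i).2 eq_i (hcomp i a) (conj (Igr _ _ Ia) (hcompG _ _))).
Qed.

Lemma hom_gens_rem I gens degs i : hom_gens G I gens degs -> (i < size gens)%N ->
  same_set I (rgen (take i gens ++ drop i.+1 gens)) ->
  hom_gens G I (take i gens ++ drop i.+1 gens) (take i degs ++ drop i.+1 degs).
Proof.
move=> [sz Ggens _] lti Irem; split=> //; first by rewrite !size_cat !size_take !size_drop sz.
move=> j; rewrite size_cat size_take size_drop lti => ltj.
rewrite !nth_cat !size_take sz lti; case: ifP => lt_ji.
  by rewrite !nth_take //; apply: Ggens; apply: ltn_trans lt_ji lti.
by rewrite !nth_drop; apply: Ggens; move: ltj lt_ji lti; lia.
Qed.

Lemma min_hom_gens_exists I gens degs : hom_gens G I gens degs ->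
  exists gens' degs', min_hom_gens G I gens' degs'.
Proof.
move: {2}(size gens) (leqnn (size gens)) => n.
elim: n gens degs => [|n IH] gens degs le_n Igens.
  by exists gens, degs; split=> // i; move: le_n; rewrite leqn0 => /eqP ->.
have [min_gens|] := classic (forall i, (i < size gens)%N ->
  ~ same_set I (rgen (take i gens ++ drop i.+1 gens))); first by exists gens, degs.
move=> /not_all_ex_not[i /[dup] /not_imply_elim lti /not_imply_elim2 /NNPP Irem].
apply: IH (hom_gens_rem Igens lti Irem).
by rewrite size_cat size_take size_drop lti; move: le_n lti; lia.
Qed.

End Graded.

(** * Rationality from a triangular system of series relations *)

Lemma size_prod_ord_le (R : comNzRingType) n (F : 'I_n -> {poly R}) D :
  (forall i, (size (F i) <= D.+1)%N) -> (size (\prod_i F i)%R <= (n * D).+1)%N.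
Proof.
elim: n F => [|n IH] F FD; first by rewrite big_ord0 size_poly1.
rewrite big_ord_recr /=; apply: leq_trans (size_polyMleq _ _) _.
have := leq_add (IH (fun i => F (widen_ord (leqnSn n) i)) (fun i => FD _)) (FD ord_max).
by case: (_ + _)%N => [|m] /=; rewrite mulSn; lia.
Qed.

Lemma size_det_le (R : comNzRingType) n (M : 'M[{poly R}]_n) D :
  (forall i j, (size (M i j) <= D.+1)%N) -> (size (\det M) <= (n * D).+1)%N.
Proof.
move=> MD; apply: (big_ind (fun p : {poly R} => (size p <= (n * D).+1)%N)).
- by rewrite size_poly0.
- by move=> p q lep leq; apply: leq_trans (size_polyD _ _) _; rewrite geq_max lep leq.
by move=> sg _; rewrite size_Msign; apply: size_prod_ord_le => i; apply: MD.
Qed.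

Lemma size_nat_poly (R : nzRingType) (b : bool) : (size (b%:R : {poly R}) <= 1)%N.
Proof. by case: b; rewrite ?size_poly0 ?size_poly1. Qed.

Lemma size_polyB_le (R : nzRingType) (p q : {poly R}) D :
  (size p <= D)%N -> (size q <= D)%N -> (size (p - q)%R <= D)%N.
Proof.
by move=> lep leq; apply: leq_trans (size_polyD _ _) _; rewrite size_polyN geq_max lep leq.
Qed.

Lemma coefMr_trunc (R : nzRingType) N (r p p' : {poly R}) n : (n < N)%N ->
  (forall m, (m < N)%N -> p`_m = p'`_m) -> (r * p)`_n = (r * p')`_n.
Proof.
move=> lt_nN pp'; rewrite !coefM; apply: eq_bigr => j _; rewrite pp' //.
exact: leq_ltn_trans (leq_subr _ _) lt_nN.
Qed.

Lemma sum_indicator_opt (R : nzRingType) n (o : option 'I_n) (F : 'I_n -> R) :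
  \sum_l (o == Some l)%:R * F l = if o is Some l then F l else 0.
Proof.
case: o => [l0|]; last by rewrite big1 // => l _; rewrite mul0r.
rewrite (bigD1 l0) //= eqxx mul1r big1 ?addr0 // => l l0l.
by rewrite (_ : (Some l0 == Some l) = false) ?mul0r //; apply: contraNF l0l => /eqP[->].
Qed.

(* The series [h i] are indexed by ['I_s]; [None] stands for the zero series.
   Row [i] says [h i = h (jx i) + z^(e i) (1 + h rx - h (kx i))], and the
   relation [lower] is well founded because it strictly decreases series. *)
Section SeriesRelations.
Variables (s' d : nat).
Local Notation s := s'.+1.
Variables (h : 'I_s -> nat -> nat) (jx kx : 'I_s -> option 'I_s) (rx : option 'I_s)
  (e : 'I_s -> nat).

Definition oseries (o : option 'I_s) n : nat := if o is Some l then h l n else 0%N.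

Definition lower i l : bool := if e i == 0%N then rx == Some l else jx i == Some l.

Hypothesis e_le : forall i, (e i <= d)%N.
Hypothesis h_rel : forall i n, (h i n)%:Z = (oseries (jx i) n)%:Z +
   (if (e i <= n)%N
    then (n == e i)%:R + (oseries rx (n - e i))%:Z - (oseries (kx i) (n - e i))%:Z
    else 0).
Hypothesis e0_jx_kx : forall i, e i = 0%N -> jx i = kx i.
Hypothesis lower_lt : forall i l, lower i l ->
  (forall n, (h l n <= h i n)%N) /\ exists n, (h l n < h i n)%N.

Definition rel_mx : 'M[{poly int}]_s :=
  \matrix_(i, l) ((i == l)%:R - (jx i == Some l)%:R +
                  'X^(e i) * ((kx i == Some l)%:R - (rx == Some l)%:R)).
Definition rel_rhs : 'cV[{poly int}]_s := \col_i 'X^(e i).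
Definition rel_den : {poly int} := \det rel_mx.
Definition rel_num i : {poly int} := (\adj rel_mx *m rel_rhs) i 0.

Definition trunc N l : {poly int} := \poly_(t < N) (h l t)%:Z.
Definition otrunc N (o : option 'I_s) : {poly int} := if o is Some l then trunc N l else 0.

Lemma coef_trunc N l n : (n < N)%N -> (trunc N l)`_n = (h l n)%:Z.
Proof. by move=> lt_nN; rewrite coef_poly lt_nN. Qed.

Lemma coef_otrunc N o n : (n < N)%N -> (otrunc N o)`_n = (oseries o n)%:Z.
Proof. by case: o => [l|] lt_nN /=; rewrite ?coef_trunc ?coef0. Qed.

Lemma rel_mx_trunc N i n : (n < N)%N ->
  (\sum_l rel_mx i l * trunc N l)`_n = (rel_rhs i 0)`_n.
Proof.
move=> lt_nN; have -> : \sum_l rel_mx i l * trunc N l =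
    trunc N i - otrunc N (jx i) + 'X^(e i) * (otrunc N (kx i) - otrunc N rx).
  rewrite (eq_bigr (fun l =>
    (Some i == Some l)%:R * trunc N l - (jx i == Some l)%:R * trunc N l +
    'X^(e i) * ((kx i == Some l)%:R * trunc N l - (rx == Some l)%:R * trunc N l))) => [|l _].
    rewrite big_split /= sumrB -mulr_sumr sumrB !sum_indicator_opt.
    by case: (jx i) => [?|]; case: (kx i) => [?|]; case: rx => [?|].
  by rewrite mxE mulrDl mulrBl -mulrA mulrBl.
have lt_sub m : (n - m < N)%N by apply: leq_ltn_trans (leq_subr _ _) lt_nN.
rewrite mxE coefD coefB coefXnM coefXn coefB !coef_otrunc ?coef_trunc // h_rel.
by case: ltnP => [lt_ne|_]; [rewrite ltn_eqF // !addr0 subrr | ring].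
Qed.

(* Cramer's rule, applied to the truncations of the series. *)
Lemma rel_den_trunc_coef i n : (rel_den * trunc n.+1 i)`_n = (rel_num i)`_n.
Proof.
pose V : 'cV[{poly int}]_s := \col_l trunc n.+1 l.
have MV : (\adj rel_mx *m (rel_mx *m V)) i 0 = rel_den * trunc n.+1 i.
  by rewrite mulmxA mul_adj_mx mul_scalar_mx !mxE.
rewrite -MV /rel_num !mxE !coef_sum; apply: eq_bigr => l _.
apply: (coefMr_trunc (N := n.+1)) => // m lt_mn; rewrite -(rel_mx_trunc l lt_mn) mxE.
rewrite /V; apply: (congr1 (fun p : {poly int} => p`_m)).
by apply: eq_bigr => j _; rewrite [_ j 0]mxE.
Qed.

Definition lower_mx : 'M[int]_s := \matrix_(i, l) (lower i l)%:R.

Lemma rel_mx_at0 : map_mx (horner_eval 0) rel_mx = 1 - lower_mx.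
Proof.
apply/matrixP => i l; rewrite !mxE horner_evalE /lower.
rewrite !(hornerD, hornerN, hornerM, hornerMn, hornerC, hornerXn, expr0n).
case: (boolP (e i == 0%N)) => [/eqP e0 | ne0]; last by rewrite mul0r addr0.
by rewrite e0_jx_kx // mul1r addrA subrK.
Qed.

(* Weights [w i = sum_(t < Nw) h i t] strictly decrease along [lower], so
   [lower_mx ^+ m] vanishes once [m] exceeds every weight. *)
Lemma lower_mx_nilpotent : exists m, lower_mx ^+ m = 0.
Proof.
have [wit wit_lt] : exists wit : 'I_s * 'I_s -> nat, forall p,
    lower p.1 p.2 -> (h p.2 (wit p) < h p.1 (wit p))%N.
  apply: (choice (fun p n => lower p.1 p.2 -> (h p.2 n < h p.1 n)%N)) => p.
  case: (boolP (lower p.1 p.2)) => [/lower_lt[_ [n lt_n]] | _]; last by exists 0%N.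
  by exists n.
pose Nw := (\max_p wit p).+1; pose w i := (\sum_(t < Nw) h i t)%N.
have w_lt i l : lower i l -> (w l < w i)%N.
  move=> il; have lt_wit : (wit (i, l) < Nw)%N by rewrite ltnS (leq_bigmax (i, l)).
  rewrite /w (bigD1 (Ordinal lt_wit)) //= [X in (_ < X)%N](bigD1 (Ordinal lt_wit)) //=.
  rewrite -addSn leq_add ?(wit_lt (i, l)) //.
  by apply: leq_sum => t _; apply: (lower_lt il).1.
have lowerX m i l : (w i < w l + m)%N -> (lower_mx ^+ m) i l = 0.
  elim: m i l => [|m IH] i l.
    by rewrite expr0 -idmxE mxE addn0; case: eqP => // ->; rewrite ltnn.
  move=> lt_wm; rewrite exprSr -mulmxE mxE big1 // => j _.
  rewrite [lower_mx j l]mxE; case: (boolP (lower j l)) => jl; last by rewrite mulr0.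
  by rewrite IH ?mul0r //; have := w_lt _ _ jl; lia.
exists (\max_i w i).+1; apply/matrixP => i l; rewrite mxE lowerX //.
by apply: leq_trans (leq_addl _ _); rewrite ltnS leq_bigmax.
Qed.

(* At [z = 0] the matrix is unipotent, [1 - nilpotent]. *)
Lemma rel_den_neq0 : rel_den != 0.
Proof.
apply/negP => /eqP den0; have [m lower0] := lower_mx_nilpotent.
have := det_map_mx (horner_eval 0) rel_mx; rewrite -/rel_den den0 rmorph0 rel_mx_at0 => det0.
have inv : (1 - lower_mx) * (\sum_(t < m) lower_mx ^+ t) = 1.
  by rewrite -opprB mulNr -subrX1 lower0 sub0r opprK.
have := congr1 determinant inv; rewrite -mulmxE det_mulmx det0 mul0r -idmxE det1.
by move/eqP; rewrite eq_sym oner_eq0.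
Qed.

Lemma size_rel_mx i l : (size (rel_mx i l) <= d.+1)%N.
Proof.
rewrite mxE; apply: leq_trans (size_polyD _ _) _; rewrite geq_max; apply/andP; split.
  by apply: (@leq_trans 1%N) => //; apply: size_polyB_le; apply: size_nat_poly.
apply: leq_trans (size_polyMleq _ _) _; rewrite size_polyXn.
have : (size (((kx i == Some l)%:R - (rx == Some l)%:R)%R : {poly int}) <= 1)%N.
  by apply: size_polyB_le; apply: size_nat_poly.
by have := e_le i; case: (size _) => [|m] /=; lia.
Qed.

Lemma size_rel_den : (size rel_den <= (d * s).+1)%N.
Proof. by rewrite mulnC; apply: size_det_le => i j; apply: size_rel_mx. Qed.

Lemma size_rel_num i : (size (rel_num i) <= (d * s).+1)%N.
Proof.
rewrite /rel_num mxE; apply: (big_ind (fun p : {poly int} => (size p <= (d * s).+1)%N)).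
- by rewrite size_poly0.
- by move=> p q lep leq; apply: leq_trans (size_polyD _ _) _; rewrite geq_max lep leq.
move=> l _; rewrite !mxE /cofactor -mulrA size_Msign.
apply: leq_trans (size_polyMleq _ _) _; rewrite size_polyXn.
have : (size (\det (row' l (col' i rel_mx))) <= (s' * d).+1)%N.
  by apply: size_det_le => a b; have := size_rel_mx (lift l a) (lift i b); rewrite !mxE.
by have := e_le l; case: (size _) => [|m] /=; rewrite mulnS; lia.
Qed.

Lemma rational_series_deg_rel :
  (forall i, rational_series_deg (d * s) (h i)) /\
  rational_series_deg (d * s) (fun n => ((n == 0%N) + oseries rx n)%N).
Proof.
have hi i n : \sum_(j < n.+1) rel_den`_j * (h i (n - j)%N)%:Z = (rel_num i)`_n.
  rewrite -rel_den_trunc_coef coefM; apply: eq_bigr => j _.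
  by rewrite coef_trunc // ltnS leq_subr.
split=> [i|].
  exists (rel_num i), rel_den; rewrite size_rel_num size_rel_den.
  by split=> //; split; [apply: rel_den_neq0 | apply: hi].
exists (rel_den + if rx is Some r then rel_num r else 0), rel_den.
split; last first.
  split; last exact: size_rel_den.
  apply: leq_trans (size_polyD _ _) _; rewrite geq_max size_rel_den.
  by case: rx => [r|]; rewrite ?size_rel_num ?size_poly0.
split=> [|n]; first exact: rel_den_neq0.
under eq_bigr => j _ do rewrite PoszD mulrDr.
rewrite big_split coefD /=; congr (_ + _).
  rewrite big_ord_recr /= subnn mulr1 big1 ?add0r // => j _.
  by rewrite subn_eq0 leqNgt ltn_ord mulr0.
by case: rx => [r|] /=; [apply: hi | rewrite big1 ?coef0 // => j _; rewrite mulr0].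
Qed.

End SeriesRelations.

Lemma rational_series_deg_eq b (f g : nat -> nat) :
  f =1 g -> rational_series_deg b g -> rational_series_deg b f.
Proof.
move=> fg [p [q [[q0 qg] size_pq]]]; exists p, q; split=> //; split=> // n.
by rewrite -qg; apply: eq_bigr => i _; rewrite fg.
Qed.

Lemma rational_series_deg0 b : rational_series_deg b (fun _ => 0%N).
Proof.
exists 0, 1; rewrite size_poly0 size_poly1; split=> //; split; first exact: oner_neq0.
by move=> n; rewrite coef0 big1 // => i _; rewrite mulr0.
Qed.

Lemma rational_series_deg1 b : rational_series_deg b (fun n => nat_of_bool (n == 0%N)).
Proof.
exists 1, 1; rewrite size_poly1; split=> //; split; first exact: oner_neq0.
move=> n; rewrite big_ord_recl /= subn0 !coef1 eqxx mul1r big1 ?addr0.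
  by case: (n == 0%N).
by move=> i _; rewrite coef1 mul0r.
Qed.

Lemma rational_series_deg_rational b f : rational_series_deg b f -> rational_series f.
Proof. by case=> p [q [pq _]]; exists p, q. Qed.

Lemma uniq_sublist (T : Type) (x0 : T) (P : T -> Prop) (L0 : seq T) :
  exists L : seq T,
  [/\ (forall i j, (i < size L)%N -> (j < size L)%N ->
         nth x0 L i = nth x0 L j -> i = j),
      (forall i, (i < size L)%N -> P (nth x0 L i))
    & (forall f i, P f -> (i < size L0)%N -> f = nth x0 L0 i ->
         exists2 j, (j < size L)%N & f = nth x0 L j)].
Proof.
elim: L0 => [|g L0 [L [L_uniq LP L0L]]]; first by exists [::].
have [[Pg gL] | gL] := classic (P g /\ ~ exists2 j, (j < size L)%N & g = nth x0 L j).
  exists (g :: L); split.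
  - case=> [|i] [|j] //= lti ltj => [gj | ig | /L_uniq-> //].
      by case: gL; exists j.
    by case: gL; exists i.
  - by case=> [|i] //= /LP.
  move=> f [|i] Pf /= lti fE; first by exists 0%N.
  by have [j ltj ->] := L0L _ _ Pf lti fE; exists j.+1.
exists L; split=> // f [|i] Pf /= lti fE; last exact: L0L Pf lti fE.
by apply: NNPP => fL; apply: gL; rewrite -fE.
Qed.

Lemma H_nonzero_card_exists (k : fieldType) (A : algType k) (G : nat -> A -> Prop)
    (F : (A -> Prop) -> Prop) :
  H_finite G F -> exists s, H_nonzero_card G F s.
Proof.
case=> L0 HL0; have [L [L_uniq LP L0L]] :=
  uniq_sublist (fun _ => 0%N) (fun f => in_H G F f /\ f <> (fun _ => 0%N)) L0.
exists (size L), L; split=> // f Hf f0.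
by have [i lti fE] := HL0 f Hf; apply: L0L fE.
Qed.

Section RateFiltration.
Variables (k : fieldType) (A : algType k) (G : nat -> A -> Prop) (F : (A -> Prop) -> Prop).
Variable d : nat.
Hypotheses (hG : standard_graded G) (hF : rate_filtration G F).
Hypothesis hd : filtration_of_degree G F d.
Implicit Types (I J K : A -> Prop).

Lemma F_ideal I : F I -> right_ideal I /\ graded G I.
Proof. by case: hF => F_fg _ _ _ /F_fg/(fg_hom_right_idealP hG). Qed.

Lemma F_hilb I : F I -> exists f, is_hilb G I f.
Proof. by move/F_ideal => [[Isub _] _]; exact (is_hilb_exists hG Isub). Qed.

Lemma F_hom_gens_le I : F I -> exists gens degs, hom_gens G I gens degs /\
  forall i, (i < size degs)%N -> (nth 0%N degs i <= d)%N.
Proof.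
case: hF => F_fg _ _ _ FI.
have [gens [degs /min_hom_gens_exists[gens' [degs' min_I]]]] := F_fg I FI.
exists gens', degs'; split=> [|i lti]; first by case: min_I.
apply: leq_trans (hd FI (ex_intro _ gens' (ex_intro _ degs' (conj min_I erefl)))).
by apply: (@leq_bigmax_seq _ _ xpredT id) => //; apply: mem_nth.
Qed.

Lemma F_step I : F I -> ~ same_set I (fun a => a = 0) ->
  exists J x e K, [/\ F J, F K, G e x, (e <= d)%N &
    [/\ same_set I (fun a => exists j r, J j /\ a = j + x * r),
        same_set K (fun a => J (x * a)) & ~ same_set J I]].
Proof.
case: hF => _ _ _ F_split FI I0.
have [J [x [FJ [JI [_ [[e Gx] [I_add_mul [_ [K [FK K_colon]]]]]]]]]] := F_split I FI I0.
exists J, x, e, K; split=> //.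
have [gens [degs [Igens le_d]]] := F_hom_gens_le FI; have [J_ideal J_graded] := F_ideal FJ.
exact (add_mul_deg_le hG J_ideal J_graded Gx I_add_mul Igens le_d JI).
Qed.

Lemma Rplus_in_H : exists fP, is_hilb G (Rplus G) fP /\ in_H G F fP.
Proof.
case: hF => _ _ [IP [FIP IPE]] _; have [fP IPf] := F_hilb FIP.
by exists fP; split; [apply: is_hilb_eq IPE IPf | exists IP].
Qed.

Lemma F_step_series I fI fR fP : F I -> is_hilb G I fI -> fI <> (fun _ => 0%N) ->
  is_hilb G (fun _ => True) fR -> is_hilb G (Rplus G) fP ->
  exists e fJ fK, [/\ (e <= d)%N, in_H G F fJ /\ in_H G F fK,
    forall n, (fI n + (if (e <= n)%N then fK (n - e) else 0) =
               fJ n + (if (e <= n)%N then ((n - e == 0%N) + fP (n - e)) else 0))%N,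
    e = 0%N -> fK =1 fJ &
    (forall n, (fJ n <= fI n)%N) /\ exists n, (fJ n < fI n)%N].
Proof.
move=> FI If fI0 Rf Pf.
have I0 : ~ same_set I (fun a => a = 0).
  by move=> /(is_hilb0 hG)/(_ If) fI0'; apply/fI0/functional_extensionality.
have [J [x [e [K [FJ FK Gx le_ed [I_add_mul K_colon JI]]]]]] := F_step FI I0.
have [fJ Jf] := F_hilb FJ; have [fK Kf] := F_hilb FK.
have [J_ideal J_graded] := F_ideal FJ; have [[Isub _] Igr] := F_ideal FI.
exists e, fJ, fK; split=> //; [by split; [exists J | exists K] | move=> n | move=> e0 |].
- have := is_hilb_add_mul hG J_ideal J_graded Gx I_add_mul K_colon If Jf Kf Rf n.
  by case: ifP => // _; rewrite (is_hilb_R_Rplus hG Rf Pf).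
- exact: (colon_scalar_hilb hG J_ideal Gx K_colon e0
    (add_mul_ideal_proper_neq0 I_add_mul JI) Jf Kf).
exact: (is_hilb_lt_proper hG Isub Igr J_ideal.1 J_graded (add_mul_ideal_sub I_add_mul) JI If Jf).
Qed.

Section Enumeration.
Variables (s' : nat) (L : seq (nat -> nat)).
Hypothesis L_size : size L = s'.+1.
Hypothesis L_H : forall i, (i < size L)%N ->
  in_H G F (nth (fun _ => 0%N) L i) /\ nth (fun _ => 0%N) L i <> (fun _ => 0%N).
Hypothesis H_L : forall f, in_H G F f -> f <> (fun _ => 0%N) ->
  exists2 i, (i < size L)%N & f = nth (fun _ => 0%N) L i.

Let hL (i : 'I_s'.+1) : nat -> nat := nth (fun _ => 0%N) L i.

Lemma in_H_index f : in_H G F f -> exists o, f =1 oseries hL o.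
Proof.
move=> Hf; have [-> | f0] := classic (f = fun _ => 0%N); first by exists None.
by have [i + ->] := H_L Hf f0; rewrite L_size => lti; exists (Some (Ordinal lti)).
Qed.

Variables (fR fP : nat -> nat) (rx : option 'I_s'.+1).
Hypotheses (Rf : is_hilb G (fun _ => True) fR) (Pf : is_hilb G (Rplus G) fP).
Hypothesis rxE : fP =1 oseries hL rx.

Lemma row_relation i : exists t : nat * option 'I_s'.+1 * option 'I_s'.+1,
  [/\ (t.1.1 <= d)%N, t.1.1 = 0%N -> t.1.2 = t.2,
      forall n, (hL i n)%:Z = (oseries hL t.1.2 n)%:Z +
        (if (t.1.1 <= n)%N
         then (n == t.1.1)%:R + (oseries hL rx (n - t.1.1))%:Z
              - (oseries hL t.2 (n - t.1.1))%:Z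
         else 0) &
      forall l, (if t.1.1 == 0%N then rx == Some l else t.1.2 == Some l) ->
        (forall n, (hL l n <= hL i n)%N) /\ exists n, (hL l n < hL i n)%N].
Proof.
have [[I [FI If]] fI0] : in_H G F (hL i) /\ hL i <> (fun _ => 0%N).
  by apply: L_H; rewrite L_size.
have [e [fJ [fK [le_ed [HJ HK] fI_rel K_J J_lt]]]] := F_step_series FI If fI0 Rf Pf.
have [oj ojE] := in_H_index HJ; have [ok okE] := in_H_index HK.
pose ok' := if e == 0%N then oj else ok.
have ok'E : fK =1 oseries hL ok'.
  by rewrite /ok'; case: eqP => [/K_J fKJ n | _]; rewrite ?fKJ.
exists (e, oj, ok'); split=> //= [|n|l].
- by move=> e0; rewrite /ok' e0.
- have := fI_rel n; rewrite -ojE -ok'E -rxE; case: leqP => [le_en | _]; last first.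
    by rewrite !addn0 addr0 => ->.
  have -> : (n - e == 0)%N = (n == e) by rewrite subn_eq0 eqn_leq le_en andbT.
  have -> : ((n == e)%:R : int) = Posz (n == e) by case: (n == e).
  by move/(congr1 Posz); rewrite !PoszD; lia.
case: eqP => [e0 /eqP rxl | _ /eqP ojl]; last first.
  have fJl n : fJ n = hL l n by rewrite ojE ojl.
  by have [le_J [n lt_J]] := J_lt; split=> [m | ]; [rewrite -fJl | exists n; rewrite -fJl].
have hil n : hL i n = ((n == 0%N) + hL l n)%N.
  by have := fI_rel n; rewrite e0 subn0 (K_J e0) rxE rxl addnC => /addnI.
by split=> [n | ]; [rewrite hil leq_addl | exists 0%N; rewrite hil].
Qed.

End Enumeration.

Lemma rational_series_deg_H_card s : H_nonzero_card G F s ->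
  (forall f, is_hilb G (fun _ => True) f -> rational_series_deg (d * s) f) /\
  (forall I f, F I -> is_hilb G I f -> rational_series_deg (d * s) f).
Proof.
case=> L [L_size _ L_H H_L]; have [fP [Pf HP]] := Rplus_in_H.
have RfP f : is_hilb G (fun _ => True) f -> f =1 (fun n => (n == 0%N) + fP n)%N.
  by move=> Rf; exact (is_hilb_R_Rplus hG Rf Pf).
case: s L_size => [|s'] L_size.
  have H0 f : in_H G F f -> f =1 (fun _ => 0%N).
    move=> Hf n; have [-> // | f0] := classic (f = fun _ => 0%N).
    by have [i] := H_L _ Hf f0; rewrite L_size.
  split=> [f /RfP Rf | I f FI If].
    apply: (rational_series_deg_eq _ (rational_series_deg1 _)) => n.
    by rewrite Rf (H0 _ HP) addn0.
  by apply: (rational_series_deg_eq _ (rational_series_deg0 _)); apply: H0; exists I.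
have [rx rxE] := in_H_index L_size H_L HP.
have [fR Rf] : exists fR, is_hilb G (fun _ => True) fR.
  exact (is_hilb_exists hG (V := fun _ => True) ltac:(by [])).
have /choice[t tP] := row_relation L_size L_H H_L Rf Pf rxE.
have [||||hL_rat R_rat] := @rational_series_deg_rel s' d (fun i => nth (fun _ => 0%N) L i)
  (fun i => (t i).1.2) (fun i => (t i).2) rx (fun i => (t i).1.1).
all: try by move=> i; case: (tP i) => e_le e0_jx_kx h_rel lower_lt.
split=> [f /RfP Rf' | I f FI If].
  by apply: (rational_series_deg_eq _ R_rat) => n; rewrite Rf' rxE.
have [[i|] iE] := in_H_index L_size H_L (ex_intro _ I (conj FI If)).
  exact: rational_series_deg_eq iE (hL_rat i).
exact: rational_series_deg_eq iE (rational_series_deg0 _).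
Qed.

End RateFiltration.

Theorem mainTheorem15 (k : fieldType) (A : algType k) (G : nat -> A -> Prop)
    (F : (A -> Prop) -> Prop) (d : nat) :
  standard_graded G ->
  rate_filtration G F ->
  filtration_of_degree G F d ->
  H_finite G F ->
  ((forall f, is_hilb G (fun _ => True) f -> rational_series f) /\
   (forall I f, F I -> is_hilb G I f -> rational_series f)) /\
  (forall s, H_nonzero_card G F s ->
     (forall f, is_hilb G (fun _ => True) f -> rational_series_deg (d * s) f) /\
     (forall I f, F I -> is_hilb G I f -> rational_series_deg (d * s) f)).
Proof.
move=> hG hF hd /H_nonzero_card_exists[s Hs].
have rat_deg := rational_series_deg_H_card hG hF hd.
have [R_rat I_rat] := rat_deg s Hs.
split=> //; split=> [f /R_rat | I f FI /(I_rat I f FI)]; exact: rational_series_deg_rational.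
Qed.
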